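(* Let $q=2^m$ with $m$ a positive integer. Let $\delta\in\mathbb{F}_{q^2}$, $b_1,b_2\in\mathbb{F}_q$ and $b_3\in\mathbb{F}_{q^2}$. Let $i$ be a non-negative integer with $i<2m$, let $j$ be the integer with $0\leq j<m$ and $j\equiv i\pmod m$, and let $d=\gcd(m,j)$. Let $$P(x)=b_1(x^q+x+\delta)^{2^i+q}+b_2(x^q+x+\delta)^{2^i+1}+b_3(x^q+x+\delta)^{2^i}+x,$$ and put $$A=(\delta+\delta^q)(b_1+b_2)+b_3+b_3^q,\quad B=1+(\delta^{2^iq}+\delta^{2^i})(b_1+b_2),$$ $$C=b_1(\delta^{2^iq+1}+\delta^{2^i+q})+b_2(\delta^{2^iq+q}+\delta^{2^i+1})+b_3^q\delta^{2^iq}+b_3\delta^{2^i}.$$ For $y$ define $G(y)=b_1y^{2^i+q}+b_2y^{2^i+1}+b_3y^{2^i}$. Then: (1) If $i\in\{0,m\}$, then $P$ permutes $\mathbb{F}_{q^2}$ if and only if $A+B\neq0$, and in that case $P^{-1}(x)=G\!\left((A+B)^{-1}(x^q+x)+(A+B)^{-1}C+\delta\right)+x$. (2) If $i\notin\{0,m\}$, $A=0$ and $B\neq0$, then $P$ permutes $\mathbb{F}_{q^2}$ and $P^{-1}(x)=G\!\left(B^{-1}(x^q+x)+B^{-1}C+\delta\right)+x$. (3) If $i\notin\{0,m\}$, $A\neq0$ and $B=0$, then $P$ permutes $\mathbb{F}_{q^2}$ and $P^{-1}(x)=G\!\left(A^{-2^{m-j}}(x^q+x)^{2^{m-j}}+(C/A)^{2^{m-j}}+\delta\right)+x$.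 (4) If $i\notin\{0,m\}$ and $AB\neq0$, then $P$ permutes $\mathbb{F}_{q^2}$ if and only if $N_{2^m/2^d}(B/A)\neq1$, and in that case $$P^{-1}(x)=G\!\left(\delta+\frac{N_{2^m/2^d}(B/A)}{1+N_{2^m/2^d}(B/A)}\sum_{k=0}^{m/d-1}\left(\frac{A}{B}\right)^{\frac{2^{(k+1)j}-1}{2^j-1}}\left(\frac{x^q+x}{A}+\frac{C}{A}\right)^{2^{kj}}\right)+x.$$
   Context: For $a\in\mathbb{F}_{2^m}$ and $d\mid m$, $N_{2^m/2^d}(a)=a^{(2^m-1)/(2^d-1)}$ is the norm to $\mathbb{F}_{2^d}$. The compositional inverse of a permutation polynomial $f$ of $\mathbb{F}_{Q}$ is the unique polynomial $f^{-1}$ (modulo $x^Q-x$) with $f(f^{-1}(c))=f^{-1}(f(c))=c$ for all $c\in\mathbb{F}_Q$. The auxiliary notation $G$ is only shorthand for writing out the three-term expression. *)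

From HB Require Import structures.
From mathcomp Require Import all_boot all_order all_algebra all_field.
Set Implicit Arguments. Unset Strict Implicit. Unset Printing Implicit Defensive.
Import GRing.Theory.
Local Open Scope ring_scope.

Section Defs.
Variables (F : finFieldType) (m : nat).

(* q = 2^m ; F is meant to be F_{q^2} *)
Definition qq : nat := (2 ^ m)%N.

Definition normF (d : nat) (a : F) : F := a ^+ ((2 ^ m - 1) %/ (2 ^ d - 1))%N.

Variables (i : nat) (delta b1 b2 b3 : F).

Definition Pfun (x : F) : F :=
  let y := x ^+ qq + x + delta in
  b1 * y ^+ (2 ^ i + qq) + b2 * y ^+ (2 ^ i + 1) + b3 * y ^+ (2 ^ i) + x.

Definition Gfun (y : F) : F :=
  b1 * y ^+ (2 ^ i + qq) + b2 * y ^+ (2 ^ i + 1) + b3 * y ^+ (2 ^ i).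

Definition Acoef : F := (delta + delta ^+ qq) * (b1 + b2) + b3 + b3 ^+ qq.

Definition Bcoef : F := 1 + (delta ^+ (2 ^ i * qq) + delta ^+ (2 ^ i)) * (b1 + b2).

Definition Ccoef : F :=
  b1 * (delta ^+ (2 ^ i * qq + 1) + delta ^+ (2 ^ i + qq))
  + b2 * (delta ^+ (2 ^ i * qq + qq) + delta ^+ (2 ^ i + 1))
  + b3 ^+ qq * delta ^+ (2 ^ i * qq) + b3 * delta ^+ (2 ^ i).

End Defs.

Definition is_inverse (F : Type) (f g : F -> F) : Prop :=
  forall c, f (g c) = c /\ g (f c) = c.

From HB Require Import structures.
From mathcomp Require Import all_boot all_order all_algebra all_field.
From mathcomp Require Import cyclic ring zify.
Import GRing.Theory.
Local Open Scope ring_scope.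
Set Implicit Arguments. Unset Strict Implicit. Unset Printing Implicit Defensive.

(* F is F_(q^2) of characteristic 2; write F_q for its subfield fixed by x |-> x^q and
   tr x = x^q + x for the trace onto it.  Expanding G in characteristic 2 shows that for
   z in F_q
     tr (G (z + delta)) = L z + z + C,   where L z = A z^(2^j) + B z,
   hence tr (P x) = L (tr x) + C.  As tr maps F onto F_q, P permutes F exactly when the
   linearized binomial L permutes F_q, and any inverse L' of L on F_q gives
   P^-1 x = G (L' (tr x + C) + delta) + x.  The four cases of the theorem are the shapes
   of L: a scalar (j = 0 or A = 0), a power of Frobenius (B = 0), and in general a map
   whose kernel is nontrivial iff B/A is a (2^j - 1)-th power in F_q, i.e. iff its norm
   to F_(2^d) is 1; otherwise L is inverted by a telescoping sum. *)

Lemma is_inverse_bij (T : Type) (f g : T -> T) : is_inverse f g -> bijective f.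
Proof. by move=> fg; exists g => x; [exact: (fg x).2 | exact: (fg x).1]. Qed.

Lemma eq_is_inverse (T : Type) (f g g' : T -> T) :
  g =1 g' -> is_inverse f g -> is_inverse f g'.
Proof. by move=> eq_g fg x; rewrite -!eq_g; exact: fg. Qed.

Lemma in_surj_inj (T : finType) (D : {pred T}) (f : T -> T) :
    {homo f : x / x \in D} -> {in D, forall y, exists2 x, x \in D & f x = y} ->
  {in D &, injective f}.
Proof.
move=> fD f_onto; apply/imset_injP; suff -> : f @: D = [set x in D] by rewrite cardsE.
apply/setP=> y; rewrite inE; apply/imsetP/idP => [[x Dx ->] | Dy]; first exact: fD.
by have [x Dx <-] := f_onto y Dy; exists x.
Qed.

Lemma gcdn_pred_exp2 a b : gcdn (2 ^ a - 1) (2 ^ b - 1) = (2 ^ gcdn a b - 1)%N.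
Proof.
elim/ltn_ind: {a b}(a + b)%N {-2}a {-2}b (erefl (a + b)%N) => n IHn a b def_n.
wlog le_ba : a b def_n / (b <= a)%N.
  move=> wlog_le; case: (leqP b a) => [|/ltnW le_ab]; first exact: wlog_le.
  by rewrite gcdnC [gcdn a b]gcdnC; apply: wlog_le; rewrite // addnC.
case: b le_ba def_n => [|b] le_ba def_n; first by rewrite subnn !gcdn0.
have -> : (2 ^ a - 1 = 2 ^ (a - b.+1) * (2 ^ b.+1 - 1) + (2 ^ (a - b.+1) - 1))%N.
  rewrite mulnBr muln1 -expnD subnK //.
  have := expn_gt0 2 (a - b.+1); have := leq_pexp2l (isT : 0 < 2)%N (leq_subr b.+1 a).
  lia.
rewrite gcdnC gcdnMDl gcdnC -{2}(subnK le_ba) [gcdn _ b.+1]gcdnC gcdnDr [gcdn b.+1 _]gcdnC.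
by apply: (IHn (a - b.+1 + b.+1)%N); rewrite ?subnK //; lia.
Qed.

Lemma mul_geom_sum_exp2 a k :
  ((2 ^ a - 1) * \sum_(l < k) 2 ^ (l * a) = 2 ^ (k * a) - 1)%N.
Proof.
rewrite [in RHS]mulnC expnM !subn1 [in RHS]predn_exp.
by congr (_ * _)%N; apply: eq_bigr => l _; rewrite -expnM mulnC.
Qed.

Lemma geom_sum_exp2 a k : (0 < a)%N ->
  (\sum_(l < k) 2 ^ (l * a) = (2 ^ (k * a) - 1) %/ (2 ^ a - 1))%N.
Proof.
move=> a_gt0; rewrite -mul_geom_sum_exp2 mulKn // subn_gt0.
by rewrite -{1}(expn0 2) ltn_exp2l.
Qed.

Lemma geom_sum_exp2S a k :
  (\sum_(l < k.+1) 2 ^ (l * a) = 1 + (\sum_(l < k) 2 ^ (l * a)) * 2 ^ a)%N.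
Proof.
rewrite big_ord_recl mul0n expn0 big_distrl; congr (_ + _)%N.
by apply: eq_bigr => l _; rewrite lift0 mulSn expnD mulnC.
Qed.

Lemma coprime_divn_gcd a b : (0 < a)%N -> coprime (a %/ gcdn a b) (b %/ gcdn a b).
Proof.
move=> a_gt0; have g_gt0 : (0 < gcdn a b)%N by rewrite gcdn_gt0 a_gt0.
by rewrite /coprime -(eqn_pmul2r g_gt0) mul1n muln_gcdl !divnK ?dvdn_gcdl ?dvdn_gcdr.
Qed.

Lemma eqn_modMr_coprime n k x y : coprime n k -> (x < n)%N -> (y < n)%N ->
  (x * k = y * k %[mod n])%N -> x = y.
Proof.
move=> co_nk; wlog le_yx : x y / (y <= x)%N.
  by move=> wlog_le; case: (leqP y x) => [|/ltnW le_xy] *; [|symmetry]; apply: wlog_le.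
move=> lt_xn lt_yn /eqP; rewrite eqn_mod_dvd ?leq_mul2r ?le_yx ?orbT //.
rewrite -mulnBl Gauss_dvdl // => n_dvd_xy; apply/eqP; rewrite eqn_leq le_yx andbT.
rewrite -subn_eq0; apply: contraLR n_dvd_xy; rewrite -lt0n => xy_gt0.
by rewrite gtnNdvd //; lia.
Qed.

Lemma expr_exp2n_modn (R : nzRingType) (x : R) a k :
  x ^+ (2 ^ a) = x -> x ^+ (2 ^ k) = x ^+ (2 ^ (k %% a)).
Proof.
move=> xa; rewrite {1}(divn_eq k a) expnD exprM; congr (_ ^+ _).
by elim: (k %/ a)%N => [|t IHt]; rewrite ?expr1 // mulSn expnD exprM xa IHt.
Qed.

Lemma expr_gcdn_root (R : nzRingType) (h : R) n k s :
  h ^+ n = 1 -> (0 < k)%N -> (gcdn k n %| s)%N -> exists x, (h ^+ x) ^+ k = h ^+ s.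
Proof.
move=> hn k_gt0 /dvdnP[s' ->]; case: (egcdnP n k_gt0) => km kn def_g _.
exists (km * s')%N; rewrite -exprM mulnAC mulnC def_g mulnDr exprD.
by rewrite mulnA mulnC exprM hn expr1n mul1r.
Qed.

Lemma finField_prim_root (F : finFieldType) : exists g : F, (#|F|.-1).-primitive_root g.
Proof.
have F_gt1 : (1 < #|F|)%N by rewrite (cardD1 0) (cardD1 1) !inE oner_neq0.
pose rs := enum (predC1 (0 : F)).
have : has (#|F|.-1).-primitive_root rs.
  apply: has_prim_root; rewrite ?enum_uniq //.
  - by rewrite -subn1 subn_gt0.
  - apply/allP=> x; rewrite mem_enum /= => nz_x; rewrite unity_rootE.
    by rewrite -(inj_eq (mulIf nz_x)) mul1r -exprSr prednK ?expf_card // ltnW.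
  - by rewrite -cardE cardC1.
by case/hasP=> g _ gP; exists g.
Qed.

Section SubfieldFq.
Variables (F : finFieldType) (m : nat).
Hypotheses (m_gt0 : (0 < m)%N) (cardF : #|F| = (2 ^ (2 * m))%N).
Local Notation q := (qq m).

Lemma pchar2_F : 2%N \in [pchar F].
Proof. exact: card_finPcharP cardF (isT : prime 2). Qed.

Lemma two_eq0 : 2 = 0 :> F.
Proof. exact: pcharf0 pchar2_F. Qed.

Lemma expr2nD k (x y : F) : (x + y) ^+ (2 ^ k) = x ^+ (2 ^ k) + y ^+ (2 ^ k).
Proof. by rewrite exprDn_pchar // (eq_pnat _ (pcharf_eq pchar2_F)) pnatX pnat_id. Qed.

Lemma expr2n_sum k (I : Type) (r : seq I) (P : pred I) (f : I -> F) :
  (\sum_(i <- r | P i) f i) ^+ (2 ^ k) = \sum_(i <- r | P i) f i ^+ (2 ^ k).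
Proof.
apply: (big_morph (fun x => x ^+ (2 ^ k))) => [x y|]; first exact: expr2nD.
by rewrite expr0n expn_eq0.
Qed.

Lemma q_gt1 : (1 < q)%N.
Proof. by rewrite -(expn0 2) ltn_exp2l. Qed.

Lemma card_F : #|F| = (q * q)%N.
Proof. by rewrite cardF -expnD addnn -mul2n. Qed.

Lemma exprqD (x y : F) : (x + y) ^+ q = x ^+ q + y ^+ q.
Proof. exact: expr2nD. Qed.

Lemma exprqK (x : F) : x ^+ q ^+ q = x.
Proof. by rewrite -exprM -card_F expf_card. Qed.

Definition subfq_pred : pred F := fun z => z ^+ q == z.
Arguments subfq_pred _ /.
Definition subfq : qualifier 0 F := [qualify z | subfq_pred z].

Lemma subfq_divring_closed : divring_closed subfq.
Proof.
split=> [|x y /eqP xq /eqP yq|x y /eqP xq /eqP yq]; rewrite qualifE /= ?expr1n //.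
  by rewrite (oppr_pchar2 pchar2_F) exprqD xq yq.
by rewrite exprMn exprVn xq yq.
Qed.

HB.instance Definition _ := GRing.isDivringClosed.Build F subfq_pred subfq_divring_closed.

Lemma subfq_unityE (z : F) : z != 0 -> (z \is subfq) = (z ^+ (q - 1) == 1).
Proof.
move=> nz_z; rewrite qualifE /= -[RHS](inj_eq (mulIf nz_z)) mul1r -exprSr subn1.
by rewrite prednK // ltnW // q_gt1.
Qed.

Lemma subfq_exp2n (z : F) k : z \is subfq -> z ^+ (2 ^ k) = z ^+ (2 ^ (k %% m)).
Proof. by move/eqP; apply: expr_exp2n_modn. Qed.

Definition tr (x : F) : F := x ^+ q + x.

Lemma tr_subfq x : tr x \is subfq.
Proof. by rewrite qualifE /= exprqD exprqK addrC. Qed.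

Lemma trD x y : tr (x + y) = tr x + tr y.
Proof. rewrite /tr exprqD; ring. Qed.

Lemma trMl w x : w \is subfq -> tr (w * x) = w * tr x.
Proof. by move/eqP=> wq; rewrite /tr exprMn wq mulrDr. Qed.

Lemma subfq_prim_root : exists2 h : F, (q - 1).-primitive_root h & h \is subfq.
Proof.
have [g g_prim] := finField_prim_root F; rewrite card_F in g_prim.
have def_q2 : ((q * q).-1 = (q - 1) * (q + 1))%N.
  by have := q_gt1; rewrite -subn1; nia.
have h_prim : (q - 1).-primitive_root (g ^+ (q + 1)).
  have := exp_prim_root g_prim (q + 1); rewrite def_q2 gcdnMl mulnK //.
  by rewrite addn1.
exists (g ^+ (q + 1)) => //.
by rewrite subfq_unityE ?(prim_expr_order h_prim) // (prim_root_eq0 h_prim) -lt0n subn_gt0 q_gt1.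
Qed.

Lemma tr_surj w : w \is subfq -> exists x, tr x = w.
Proof.
have [g g_prim] := finField_prim_root F; rewrite card_F in g_prim.
have q2_gt1 : (1 < q * q)%N by have := q_gt1; nia.
have g_notin : g \notin subfq.
  have nz_g : g != 0 by rewrite (prim_root_eq0 g_prim) -lt0n -subn1 subn_gt0.
  rewrite subfq_unityE // -(prim_order_dvd g_prim) gtnNdvd -?subn1 //; have := q_gt1; nia.
have nz_trg : tr g != 0.
  by apply: contra g_notin; rewrite /tr addr_eq0 (oppr_pchar2 pchar2_F) qualifE.
move=> Fw; exists (w * (g / tr g)).
by rewrite trMl // [g / _]mulrC trMl ?rpredV ?tr_subfq // mulVf ?mulr1.
Qed.

Section TraceReduction.
Variables (Gy L : F -> F) (delta C0 : F).
Hypotheses (tr_Gy : {in subfq, forall z, tr (Gy (z + delta)) = L z + z + C0})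
  (C0_subfq : C0 \is subfq) (L_subfq : {homo L : z / z \is subfq}).

Let P x := Gy (tr x + delta) + x.

Lemma tr_reduction x : tr (P x) = L (tr x) + C0.
Proof. by rewrite /P trD tr_Gy ?tr_subfq //; ring: two_eq0. Qed.

Lemma reduction_bij_inj : bijective P -> {in subfq &, injective L}.
Proof.
case=> Pinv PK PinvK; apply: in_surj_inj => // w Fw.
have [c tr_c] := tr_surj (rpredD Fw C0_subfq).
exists (tr (Pinv c)); first exact: tr_subfq.
by apply: (addIr C0); rewrite -tr_reduction PinvK.
Qed.

Lemma reduction_not_bij z : z \is subfq -> z != 0 -> L z = L 0 -> ~ bijective P.
Proof.
move=> Fz nz_z eq_L /reduction_bij_inj L_inj.
by move/eqP: nz_z; apply; apply: L_inj; rewrite ?rpred0.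
Qed.

Lemma reduction_inverse (Linv : F -> F) :
    {homo Linv : w / w \is subfq} -> {in subfq, cancel Linv L} ->
  is_inverse P (fun x => Gy (Linv (tr x + C0) + delta) + x).
Proof.
move=> Linv_subfq LinvK.
have L_inj : {in subfq &, injective L}.
  by apply: in_surj_inj => // w Fw; exists (Linv w); [exact: Linv_subfq | exact: LinvK].
move=> x; split.
  have Fz : Linv (tr x + C0) \is subfq by rewrite Linv_subfq // rpredD ?tr_subfq.
  have tr_z : tr (Gy (Linv (tr x + C0) + delta) + x) = Linv (tr x + C0).
    rewrite trD tr_Gy // LinvK; last by rewrite rpredD ?tr_subfq.
    ring: two_eq0.
  by rewrite /P tr_z; ring: two_eq0.
have -> : tr (P x) + C0 = L (tr x) by rewrite tr_reduction; ring: two_eq0.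
have LK : {in subfq, cancel L Linv}.
  by move=> y Fy; apply: L_inj; rewrite ?LinvK ?Linv_subfq ?L_subfq.
by rewrite LK ?tr_subfq // /P; ring: two_eq0.
Qed.

End TraceReduction.

Section Norm.
Variable j : nat.
Local Notation d := (gcdn m j).
Local Notation n := (m %/ gcdn m j)%N.

Lemma gcdn_gt0_m : (0 < d)%N.
Proof. by rewrite gcdn_gt0 m_gt0. Qed.

Lemma divn_gcdlK : (n * d = m)%N.
Proof. by rewrite divnK // dvdn_gcdl. Qed.

Lemma divn_gcd_gt0 : (0 < n)%N.
Proof. by rewrite divn_gt0 ?gcdn_gt0_m // dvdn_leq // dvdn_gcdl. Qed.

Lemma normF_expE : ((2 ^ m - 1) %/ (2 ^ d - 1) = \sum_(l < n) 2 ^ (l * d))%N.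
Proof. by rewrite geom_sum_exp2 ?gcdn_gt0_m // divn_gcdlK. Qed.

Lemma normF_exp_gt0 : (0 < (2 ^ m - 1) %/ (2 ^ d - 1))%N.
Proof. by rewrite normF_expE (bigD1 (Ordinal divn_gcd_gt0)) //= mul0n expn0. Qed.

Lemma mul_normF_exp : ((2 ^ d - 1) * ((2 ^ m - 1) %/ (2 ^ d - 1)) = 2 ^ m - 1)%N.
Proof. by rewrite normF_expE mul_geom_sum_exp2 divn_gcdlK. Qed.

Lemma normF_expr_sum x : x \is subfq -> normF m d x = x ^+ (\sum_(l < n) 2 ^ (l * j)).
Proof.
move=> Fx; rewrite /normF normF_expE !expr_sum.
(* l |-> l * (j/d) mod n permutes 'I_n, and (l * (j/d) mod n) * d = l * j mod m. *)
pose h (l : 'I_n) := Ordinal (ltn_pmod (l * (j %/ d)) divn_gcd_gt0).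
have h_inj : injective h.
  move=> l1 l2 /(congr1 val) /=.
  move/(eqn_modMr_coprime (coprime_divn_gcd j m_gt0) (ltn_ord l1) (ltn_ord l2)).
  exact: val_inj.
rewrite (reindex_inj h_inj); apply: eq_bigr => l _ /=.
rewrite [RHS](subfq_exp2n _ Fx); congr (x ^+ (2 ^ _)).
by rewrite muln_modl -mulnA divnK ?dvdn_gcdr // divn_gcdlK.
Qed.

Lemma normF_frob x : x \is subfq -> x != 0 -> normF m d x ^+ (2 ^ j) = normF m d x.
Proof.
move=> Fx nz_x; set N := normF m d x.
have N_fixd : N ^+ (2 ^ d) = N.
  rewrite -[(2 ^ d)%N]prednK ?expn_gt0 // exprS -subn1 /N /normF -exprM mulnC.
  by rewrite mul_normF_exp; move: Fx; rewrite subfq_unityE // => /eqP ->; rewrite mulr1.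
by rewrite (expr_exp2n_modn _ N_fixd) (eqP (dvdn_gcdr m j)) expr1.
Qed.

End Norm.

Definition linbinom (A B : F) (j : nat) (z : F) : F := A * z ^+ (2 ^ j) + B * z.

Lemma linbinom_subfq A B j :
  A \is subfq -> B \is subfq -> {homo linbinom A B j : z / z \is subfq}.
Proof. by move=> FA FB z Fz; rewrite rpredD ?rpredM ?rpredX. Qed.

Lemma linbinom0 A B j : linbinom A B j 0 = 0.
Proof. by rewrite /linbinom expr0n expn_eq0 !mulr0 addr0. Qed.

Definition linbinom_inv (A B : F) (j : nat) (w : F) : F :=
  let N := normF m (gcdn m j) (B / A) in
  N / (1 + N) * \sum_(0 <= k < m %/ gcdn m j)
     (A / B) ^+ ((2 ^ ((k + 1) * j) - 1) %/ (2 ^ j - 1)) * (w / A) ^+ (2 ^ (k * j)).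

Section LinearizedBinomial.
Variables (A B : F) (j : nat).
Hypotheses (A_subfq : A \is subfq) (B_subfq : B \is subfq) (nz_A : A != 0) (nz_B : B != 0).
Hypothesis j_gt0 : (0 < j)%N.
Local Notation d := (gcdn m j).
Local Notation n := (m %/ gcdn m j)%N.
Local Notation L := (linbinom A B j).
Local Notation N := (normF m (gcdn m j) (B / A)).

Let BA_subfq : B / A \is subfq. Proof. by rewrite rpredM ?rpredV. Qed.
Let BA_neq0 : B / A != 0. Proof. by rewrite mulf_neq0 ?invr_eq0. Qed.

Lemma linbinom_kernel : N = 1 -> exists z, [/\ z \is subfq, z != 0 & L z = 0].
Proof.
(* In the cyclic group F_q^* of order 2^m - 1, N = 1 says that 2^d - 1, which is
   gcd (2^j - 1, 2^m - 1), divides the index of B/A; so B/A = z^(2^j - 1), and then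
   L z = z (A z^(2^j - 1) + B) = z (B + B) = 0. *)
move=> N1; have t_unit : (B / A) ^+ (q - 1) = 1 by apply/eqP; rewrite -subfq_unityE.
have [h h_prim Fh] := subfq_prim_root; have [[s _] /= def_t] := prim_rootP h_prim t_unit.
have dvd_s : (2 ^ d - 1 %| s)%N.
  rewrite -(dvdn_pmul2r (normF_exp_gt0 j)) mul_normF_exp (prim_order_dvd h_prim).
  by rewrite exprM -def_t -N1.
have k_gt0 : (0 < 2 ^ j - 1)%N by rewrite subn_gt0 -(expn0 2) ltn_exp2l.
have [x def_z] : exists x, (h ^+ x) ^+ (2 ^ j - 1) = B / A.
  rewrite def_t; apply: expr_gcdn_root (prim_expr_order h_prim) k_gt0 _.
  by rewrite gcdn_pred_exp2 gcdnC.
exists (h ^+ x); split; first exact: rpredX.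
  by apply: contraNneq BA_neq0 => z0; rewrite -def_z z0 expr0n eqn0Ngt k_gt0.
rewrite /linbinom -[(2 ^ j)%N](@subnK 1) ?expn_gt0 // exprD expr1 def_z.
by rewrite mulrA mulrCA divff //; ring: two_eq0.
Qed.


Lemma linbinom_inv_subfq : {homo linbinom_inv A B j : w / w \is subfq}.
Proof.
move=> w Fw; have FN : N \is subfq by rewrite rpredX.
rewrite /linbinom_inv /= rpredM //; first by rewrite rpredM ?rpredV ?rpredD ?rpred1.
by rewrite rpred_sum // => k _; rewrite rpredM ?rpredX // rpredM ?rpredV.
Qed.

Lemma linbinom_invK : N != 1 -> {in subfq, cancel (linbinom_inv A B j) L}.
Proof.
move=> N_neq1 w Fw; set a := A / B; set u := w / A; set M := normF m d a.
have Fa : a \is subfq by rewrite rpredM ?rpredV.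
have nz_a : a != 0 by rewrite mulf_neq0 ?invr_eq0.
have Fu : u \is subfq by rewrite rpredM ?rpredV.
(* L (c S) = c B (a S^(2^j) + S) where a f_k^(2^j) = f_(k+1), so the sum telescopes to
   f_0 + f_n = a u (1 + M), and c = N / (1 + N) is the inverse of 1 + M. *)
pose f k := a ^+ (\sum_(l < k.+1) 2 ^ (l * j)) * u ^+ (2 ^ (k * j)).
set S := \sum_(0 <= k < n) f k.
have def_S : linbinom_inv A B j w = N / (1 + N) * S.
  by congr (_ * _); apply: eq_bigr => k _; rewrite /f geom_sum_exp2 // addn1.
have f_succ k : a * f k ^+ (2 ^ j) = f k.+1.
  by rewrite /f exprMn -!exprM -expnD mulSn addnC mulrA -exprS [in RHS]geom_sum_exp2S add1n.
have f_0 : f 0%N = a * u by rewrite /f big_ord1 mul0n expn0 !expr1.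
have f_n : f n = a * M * u.
  have nj_mod : ((n * j) %% m = 0)%N.
    apply/eqP; rewrite -/(dvdn _ _) -{1}(divn_gcdlK j).
    by rewrite dvdn_pmul2l ?(divn_gcd_gt0 j) // dvdn_gcdr.
  rewrite /f geom_sum_exp2S exprD expr1 exprM -normF_expr_sum // normF_frob //.
  by rewrite (subfq_exp2n _ Fu) nj_mod expn0 expr1.
have S_tel : a * S ^+ (2 ^ j) + S = a * u * (1 + M).
  rewrite expr2n_sum mulr_sumr (eq_bigr _ (fun k _ => f_succ k)).
  rewrite -[X in _ + X](oppr_pchar2 pchar2_F) -sumrB telescope_sumr ?(divn_gcd_gt0 j) //.
  by rewrite (oppr_pchar2 pchar2_F) f_n f_0; ring.
have NM : N * M = 1.
  by rewrite /M /normF -exprMn /a -invf_div mulVf ?expr1n.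
have nz_1N : 1 + N != 0.
  by apply: contra N_neq1; rewrite addr_eq0 (oppr_pchar2 pchar2_F) eq_sym.
have c_frob : (N / (1 + N)) ^+ (2 ^ j) = N / (1 + N).
  by rewrite exprMn exprVn expr2nD expr1n normF_frob.
have c_M : N / (1 + N) * (1 + M) = 1.
  by rewrite mulrAC mulrDr mulr1 NM addrC divff.
have def_A : A = B * a by rewrite /a mulrC divfK.
rewrite def_S /linbinom exprMn c_frob; set c := N / (1 + N).
transitivity (c * B * (a * S ^+ (2 ^ j) + S)); first by rewrite {1}def_A; ring.
rewrite S_tel; transitivity (c * (1 + M) * (B * a * u)); first by ring.
by rewrite c_M mul1r -def_A /u mulrC divfK.
Qed.

End LinearizedBinomial.

Section Coefficients.
Variables (delta b1 b2 b3 : F) (i : nat).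
Hypotheses (b1_subfq : b1 \is subfq) (b2_subfq : b2 \is subfq).
Local Notation j := (i %% m)%N.
Local Notation A := (Acoef m delta b1 b2 b3).
Local Notation B := (Bcoef m i delta b1 b2).
Local Notation C := (Ccoef m i delta b1 b2 b3).
Local Notation P := (Pfun m i delta b1 b2 b3).
Local Notation G := (Gfun m i b1 b2 b3).
Local Notation L := (linbinom A B j).

Lemma Acoef_subfq : A \is subfq.
Proof.
have -> : A = tr delta * (b1 + b2) + tr b3 by rewrite /Acoef /tr; ring.
by apply: rpredD; [apply: rpredM; [exact: tr_subfq | exact: rpredD] | exact: tr_subfq].
Qed.

Lemma Bcoef_subfq : B \is subfq.
Proof.
have -> : B = 1 + tr (delta ^+ (2 ^ i)) * (b1 + b2) by rewrite /Bcoef /tr exprM; ring.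
by apply: rpredD; [exact: rpred1 | apply: rpredM; [exact: tr_subfq | exact: rpredD]].
Qed.

Lemma Ccoef_subfq : C \is subfq.
Proof.
have -> : C = b1 * tr (delta ^+ (2 ^ i) * delta ^+ q) + b2 * tr (delta ^+ (2 ^ i) * delta)
             + tr (b3 * delta ^+ (2 ^ i)).
  by rewrite /Ccoef /tr !exprMn exprqK !exprD !expr1 !exprM; ring.
by apply: rpredD; [apply: rpredD; apply: rpredM => // | ]; exact: tr_subfq.
Qed.

Lemma tr_Gfun : {in subfq, forall z, tr (G (z + delta)) = L z + z + C}.
Proof.
move=> z Fz; have /eqP zq := Fz; rewrite /linbinom -(subfq_exp2n _ Fz).
have /eqP b1q := b1_subfq; have /eqP b2q := b2_subfq.
rewrite /tr /Gfun /Acoef /Bcoef /Ccoef !exprD !expr1 !exprM !(exprqD, exprMn).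
rewrite expr2nD exprqD [z ^+ _ ^+ q]exprAC !exprqK zq b1q b2q.
ring: two_eq0.
Qed.

Lemma Pfun_not_bij z : z \is subfq -> z != 0 -> L z = 0 -> ~ bijective P.
Proof.
move=> Fz nz_z Lz; have L_subfq := linbinom_subfq j Acoef_subfq Bcoef_subfq.
by apply: (reduction_not_bij tr_Gfun Ccoef_subfq L_subfq Fz nz_z); rewrite Lz linbinom0.
Qed.

Lemma Pfun_inverse (Linv : F -> F) :
    {homo Linv : w / w \is subfq} -> {in subfq, cancel Linv L} ->
  is_inverse P (fun x => G (Linv (tr x + C) + delta) + x).
Proof.
have L_subfq := linbinom_subfq j Acoef_subfq Bcoef_subfq.
exact: (reduction_inverse tr_Gfun Ccoef_subfq L_subfq (Linv := Linv)).
Qed.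

Lemma Pfun_perm_j0 : j = 0%N ->
  (bijective P <-> A + B != 0) /\
  (A + B != 0 ->
   is_inverse P (fun x => G ((A + B)^-1 * (x ^+ q + x) + (A + B)^-1 * C + delta) + x)).
Proof.
move=> j0; have FA := Acoef_subfq; have FB := Bcoef_subfq.
have L_j0 z : L z = (A + B) * z by rewrite /linbinom j0 expn0 expr1 -mulrDl.
have P_inv : A + B != 0 ->
    is_inverse P (fun x => G ((A + B)^-1 * (x ^+ q + x) + (A + B)^-1 * C + delta) + x).
  move=> nz_AB; apply: eq_is_inverse (Pfun_inverse (Linv := fun w => (A + B)^-1 * w) _ _).
  - by move=> x; rewrite mulrDr.
  - by move=> w Fw; rewrite rpredM ?rpredV // rpredD.
  - by move=> w Fw; rewrite L_j0 mulVKf.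
split=> //; split=> [P_bij | /P_inv/is_inverse_bij //].
by apply/eqP=> AB0; apply: (Pfun_not_bij (rpred1 _) (oner_neq0 _) _ P_bij); rewrite L_j0 AB0 mul0r.
Qed.

Lemma Pfun_inverse_A0 : A = 0 -> B != 0 ->
  is_inverse P (fun x => G (B^-1 * (x ^+ q + x) + B^-1 * C + delta) + x).
Proof.
move=> A0 nz_B; apply: eq_is_inverse (Pfun_inverse (Linv := fun w => B^-1 * w) _ _).
- by move=> x; rewrite mulrDr.
- by move=> w Fw; rewrite rpredM ?rpredV ?Bcoef_subfq.
- by move=> w Fw; rewrite /linbinom A0 mul0r add0r mulVKf.
Qed.

Lemma Pfun_inverse_B0 : A != 0 -> B = 0 ->
  is_inverse P (fun x => G ((A^-1) ^+ (2 ^ (m - j)) * (x ^+ q + x) ^+ (2 ^ (m - j))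
                           + (C / A) ^+ (2 ^ (m - j)) + delta) + x).
Proof.
move=> nz_A B0; have Fdiv w : w \is subfq -> w / A \is subfq.
  by move=> Fw; rewrite rpredM ?rpredV ?Acoef_subfq.
apply: eq_is_inverse (Pfun_inverse (Linv := fun w => (w / A) ^+ (2 ^ (m - j))) _ _).
- by move=> x; congr (G (_ + delta) + x); rewrite mulrDl expr2nD exprMn mulrC.
- by move=> w Fw; rewrite rpredX ?Fdiv.
move=> w Fw; rewrite /linbinom B0 mul0r addr0 -exprM -expnD subnK; last by rewrite ltnW ?ltn_pmod.
by have /eqP -> := Fdiv w Fw; rewrite mulrC divfK.
Qed.

Lemma Pfun_perm_AB : (0 < j)%N -> A * B != 0 ->
  let N := normF m (gcdn m j) (B / A) in
  (bijective P <-> N != 1) /\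
  (N != 1 -> is_inverse P (fun x =>
     G (delta + N / (1 + N) *
        \sum_(0 <= k < (m %/ gcdn m j)%N)
           (A / B) ^+ ((2 ^ ((k + 1) * j) - 1) %/ (2 ^ j - 1))
           * ((x ^+ q + x) / A + C / A) ^+ (2 ^ (k * j))) + x)).
Proof.
move=> j_gt0; rewrite mulf_eq0 negb_or => /andP[nz_A nz_B] N.
have FA := Acoef_subfq; have FB := Bcoef_subfq.
have P_inv : N != 1 -> is_inverse P (fun x =>
     G (delta + N / (1 + N) *
        \sum_(0 <= k < (m %/ gcdn m j)%N)
           (A / B) ^+ ((2 ^ ((k + 1) * j) - 1) %/ (2 ^ j - 1))
           * ((x ^+ q + x) / A + C / A) ^+ (2 ^ (k * j))) + x).
  move=> N_neq1; apply: eq_is_inverse (Pfun_inverse (linbinom_inv_subfq j FA FB)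
                                      (linbinom_invK FA FB nz_A nz_B j_gt0 N_neq1)).
  move=> x; rewrite [_ + delta]addrC /linbinom_inv -/N.
  by under [in RHS]eq_bigr do rewrite -mulrDl.
split=> //; split=> [P_bij | /P_inv/is_inverse_bij //].
apply/eqP=> N1; have [z [Fz nz_z Lz]] := linbinom_kernel FA FB nz_A nz_B j_gt0 N1.
exact: Pfun_not_bij Fz nz_z Lz P_bij.
Qed.

End Coefficients.
End SubfieldFq.

Theorem theorem3p16 (F : finFieldType) (m : nat) (hm : (0 < m)%N)
  (hF : #|F| = (2 ^ (2 * m))%N)
  (delta b1 b2 b3 : F)
  (hb1 : b1 ^+ qq m = b1) (hb2 : b2 ^+ qq m = b2)
  (i : nat) (hi : (i < 2 * m)%N) :
  let j := (i %% m)%N in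
  let d := gcdn m j in
  let q := qq m in
  let P := Pfun m i delta b1 b2 b3 in
  let G := Gfun m i b1 b2 b3 in
  let A := Acoef m delta b1 b2 b3 in
  let B := Bcoef m i delta b1 b2 in
  let C := Ccoef m i delta b1 b2 b3 in
  ((i = 0%N \/ i = m) ->
     (bijective P <-> A + B != 0) /\
     (A + B != 0 ->
        is_inverse P (fun x => G ((A + B)^-1 * (x ^+ q + x) + (A + B)^-1 * C + delta) + x)))
  /\
  ((i <> 0%N /\ i <> m) -> A = 0 -> B != 0 ->
     bijective P /\
     is_inverse P (fun x => G (B^-1 * (x ^+ q + x) + B^-1 * C + delta) + x))
  /\
  ((i <> 0%N /\ i <> m) -> A != 0 -> B = 0 ->
     bijective P /\
     is_inverse P (fun x => G ((A^-1) ^+ (2 ^ (m - j))%N * (x ^+ q + x) ^+ (2 ^ (m - j))%N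
                              + (C / A) ^+ (2 ^ (m - j))%N + delta) + x))
  /\
  ((i <> 0%N /\ i <> m) -> A * B != 0 ->
     (bijective P <-> normF m d (B / A) != 1) /\
     (normF m d (B / A) != 1 ->
        is_inverse P (fun x =>
          let N := normF m d (B / A) in
          G (delta + N / (1 + N) *
               \sum_(0 <= k < (m %/ d)%N)
                  (A / B) ^+ ((2 ^ ((k + 1) * j) - 1) %/ (2 ^ j - 1))%N
                  * ((x ^+ q + x) / A + C / A) ^+ (2 ^ (k * j))%N) + x))).
Proof.
move=> j d q P G A B C.
have Fb1 : b1 \is subfq F m by apply/eqP.
have Fb2 : b2 \is subfq F m by apply/eqP.
split; [|split; [|split]].
- move=> i0m; apply: Pfun_perm_j0 => //.
  by case: i0m => ->; rewrite ?mod0n ?modnn.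
- move=> _ A0 nz_B; have P_inv := Pfun_inverse_A0 hF Fb1 Fb2 A0 nz_B.
  by split=> //; exact: is_inverse_bij P_inv.
- move=> _ nz_A B0; have P_inv := Pfun_inverse_B0 hm hF Fb1 Fb2 nz_A B0.
  by split=> //; exact: is_inverse_bij P_inv.
move=> [i_neq0 i_neqm]; apply: Pfun_perm_AB => //.
have [lt_im | le_mi] := ltnP i m; first by rewrite modn_small // lt0n; apply/eqP.
by rewrite -(subnK le_mi) modnDr modn_small; lia.
Qed.
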